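(* Let $q > 1$ be an integer. For all positive integers $n$ and $M$, $$|C(n,q,M)| \leq \left(\frac{q}{q-1}\right)^{n-1}q^{M-2^n+n+1}.$$
   Context: Fix the alphabet $\{x_0,\ldots,x_{q-1}\}$ of $q$ letters. A word $W$ is an instance of a word $V = y_0y_1\cdots y_{m-1}$ (each $y_i$ a letter) if $W = A_0A_1\cdots A_{m-1}$ with each $A_i$ a nonempty word and $A_i = A_j$ whenever $y_i = y_j$. The Zimin words are defined by $Z_0 := \varepsilon$ (the empty word) and $Z_{n+1} := Z_n z_n Z_n$ for distinct letters $z_0,z_1,\dots$. $C(n,q,M)$ denotes the set of words $W \in \{x_0,\ldots,x_{q-1}\}^M$ that are instances of $Z_n$. *)

From mathcomp Require Import all_boot all_order all_algebra.
From Stdlib Require Import ClassicalEpsilon.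
Set Implicit Arguments. Unset Strict Implicit. Unset Printing Implicit Defensive.

(* Zimin words over the pattern alphabet nat: letter z_i is encoded as i.
   Z_0 = [::], Z_{n+1} = Z_n ++ [:: n] ++ Z_n. *)
Fixpoint zimin (n : nat) : seq nat :=
  if n is m.+1 then zimin m ++ m :: zimin m else [::].

Definition is_instance (T : eqType) (W : seq T) (V : seq nat) : Prop :=
  exists A : seq (seq T),
    [/\ size A = size V,
        W = flatten A,
        (forall i, i < size A -> nth [::] A i != [::]) &
        (forall i j, i < size V -> j < size V ->
           nth 0%N V i = nth 0%N V j -> nth [::] A i = nth [::] A j)].

Definition pbool (P : Prop) : bool :=
  if excluded_middle_informative P then true else false.

Definition C (n q M : nat) : {set M.-tuple 'I_q} :=
  [set W : M.-tuple 'I_q | pbool (is_instance (tval W) (zimin n))].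

From mathcomp Require Import all_boot all_order all_algebra zify ring.
From Stdlib Require Import ClassicalEpsilon.

(* An instance of Z_(n+1) = Z_n z_n Z_n is a word U x U with U an instance of
   Z_n and x nonempty, so it is determined by the border U, of some length m
   with 2m < M, together with the middle block:
   |C(n+1,q,M)| <= sum_(2m < M) |C(n,q,m)| q^(M-2m).
   As C(n,q,m) is empty for m < 2^n - 1, feeding the bound for n into this
   recursion leaves a geometric series with ratio 1/q, which costs one factor
   q/(q-1) per level.  The bound is proved over nat with denominators cleared. *)


Section Words.

Variable q : nat.

Fixpoint words (k : nat) : seq (seq 'I_q) :=
  if k is k'.+1 then [seq x :: w | x <- enum 'I_q, w <- words k'] else [:: [::]].

Lemma size_words k : size (words k) = q ^ k.
Proof. by elim: k => //= k IHk; rewrite size_allpairs size_enum_ord IHk expnS. Qed.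

Lemma mem_words k w : (w \in words k) = (size w == k).
Proof.
elim: k w => [|k IHk] [|x w] //=.
- by apply/allpairsP; case=> -[a b] /= [_ _].
- apply/allpairsP/idP => [[[a b] /= [_ b_k [_ ->]]]|size_w].
    by rewrite eqSS -IHk.
  by exists (x, w); rewrite /= mem_enum IHk.
Qed.

Lemma uniq_words k : uniq (words k).
Proof.
elim: k => //= k IHk; apply: allpairs_uniq => //; first exact: enum_uniq.
by move=> [a b] [c d] _ _ /= [-> ->].
Qed.

Lemma count_words_cat (p : pred (seq 'I_q)) a b :
  count p (words (a + b)) =
    \sum_(u <- words a) count (fun v => p (u ++ v)) (words b).
Proof.
elim: a p => [|a IHa] p; first by rewrite big_seq1.
rewrite addSn /= -sum1_count big_mkcond !big_allpairs_dep /=.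
by apply: eq_bigr => x _; rewrite -big_mkcond sum1_count IHa.
Qed.

Lemma card_tuples_count M (p : pred (seq 'I_q)) :
  #|[set W : M.-tuple 'I_q | p W]| = count p (words M).
Proof.
rewrite cardsE cardE /enum_mem size_filter -(count_map val).
apply/permP/uniq_perm; last 1 first.
- move=> w; rewrite mem_words; apply/mapP/eqP => [[t _ ->]|size_w].
    exact: size_tuple.
  by exists (Tuple (introT eqP size_w)); rewrite -?enumT ?mem_enum.
- by rewrite (map_inj_uniq val_inj) -enumT enum_uniq.
- exact: uniq_words.
Qed.

End Words.

Lemma size_zimin n : size (zimin n) = (2 ^ n).-1.
Proof. by elim: n => //= n IHn; rewrite size_cat /= IHn expnS; lia. Qed.

Lemma size_instance (T : eqType) (W : seq T) V : is_instance W V -> size V <= size W.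
Proof.
case=> A [<- -> nonempty _]; elim: A nonempty => //= a A IHA nonempty.
rewrite size_cat -add1n leq_add ?(IHA (fun i => nonempty i.+1)) //.
by rewrite lt0n size_eq0 (nonempty 0).
Qed.

Lemma instance_split (T : eqType) (W : seq T) V y :
  is_instance W (V ++ y :: V) ->
  exists U x, [/\ W = U ++ x ++ U, x != [::] & is_instance U V].
Proof.
case=> A [size_A -> nonempty consistent].
move: size_A consistent; rewrite size_cat /=.
move size_V: (size V) => s size_A consistent.
have nth_left i : i < s -> nth 0 (V ++ y :: V) i = nth 0 V i.
  by move=> lt_is; rewrite nth_cat size_V lt_is.
have nth_right i : nth 0 (V ++ y :: V) (s.+1 + i) = nth 0 V i.
  rewrite nth_cat size_V ifN; last by lia.
  by rewrite (_ : s.+1 + i - s = i.+1) //; lia.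
have split_A : A = take s A ++ nth [::] A s :: drop s.+1 A.
  by rewrite -drop_nth ?cat_take_drop //; lia.
have size_take_A : size (take s A) = s by rewrite size_takel // size_A leq_addr.
have right_eq_left : drop s.+1 A = take s A.
  apply: (@eq_from_nth _ [::]) => [|i]; first by rewrite size_drop; lia.
  rewrite size_drop => lt_i; rewrite nth_drop nth_take; last by lia.
  by apply: consistent; rewrite ?nth_right ?nth_left //; lia.
exists (flatten (take s A)), (nth [::] A s); split.
- by rewrite {1}split_A right_eq_left flatten_cat.
- by apply: nonempty; lia.
- exists (take s A); rewrite size_take_A size_V.
  split=> // [i lt_i|i j lt_i lt_j eq_ij]; rewrite ?nth_take //.
    by apply: nonempty; lia.
  by apply: consistent; rewrite ?nth_left //; lia.
Qed.

Lemma count_le_sum_count (T I : eqType) (a : pred T) (b : I -> pred T) r s :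
  {in s, forall x, a x -> has (b^~ x) r} ->
  count a s <= \sum_(i <- r) count (b i) s.
Proof.
elim: s => [|x s IHs] a_has /=; first by rewrite big1.
rewrite big_split /= leq_add //; last first.
  by apply: IHs => y s_y; apply: a_has; rewrite inE s_y orbT.
case: (boolP (a x)) => // ax; have /hasP[i r_i b_ix] := a_has x (mem_head x s) ax.
by rewrite lt0n sum_nat_seq_eq0; apply/allPn; exists i; rewrite ?b_ix.
Qed.

Section Counting.

Variable q : nat.

Definition zimin_instance n (W : seq 'I_q) : bool := pbool (is_instance W (zimin n)).

Definition ninstances n M : nat := count (zimin_instance n) (words q M).

Definition zimin_border n m (W : seq 'I_q) : bool :=
  [&& 2 * m < size W, zimin_instance n (take m W) & drop (size W - m) W == take m W].

Lemma zimin_instanceP n W : reflect (is_instance W (zimin n)) (zimin_instance n W).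
Proof. by rewrite /zimin_instance /pbool; case: excluded_middle_informative; constructor. Qed.

Lemma ninstances_small n M : M < size (zimin n) -> ninstances n M = 0.
Proof.
move=> lt_M; apply/eqP; rewrite -leqn0 leqNgt -has_count; apply/hasPn => W.
rewrite mem_words => /eqP size_W; apply/zimin_instanceP => /size_instance.
by rewrite size_W leqNgt lt_M.
Qed.

Lemma zimin_instance_border n W :
  zimin_instance n.+1 W -> has (zimin_border n ^~ W) (iota 0 (size W)).
Proof.
move/zimin_instanceP/instance_split => [U [x [-> x_nonempty inst_U]]].
(* Retype U and x so that [lia] sees a single [size] atom for each. *)
change (seq 'I_q) in U, x.
have size_x : 0 < size x by rewrite lt0n size_eq0.
apply/hasP; exists (size U); first by rewrite mem_iota /= !size_cat; lia.
rewrite /zimin_border take_size_cat // !catA size_cat addnK drop_size_cat //.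
by rewrite eqxx andbT !size_cat; apply/andP; split; [lia | apply/zimin_instanceP].
Qed.

Lemma count_zimin_border n m M : 2 * m < M ->
  count (zimin_border n m) (words q M) <= ninstances n m * q ^ (M - 2 * m).
Proof.
(* Writing W = u ++ v ++ w with |u| = |w| = m, the border condition reads
   "u is an instance of Z_n and w = u", so v is the only free block. *)
move=> lt_2m_M; have def_M : M = m + ((M - 2 * m) + m) by lia.
move: (M - 2 * m) def_M => k def_M; rewrite def_M in lt_2m_M *.
rewrite count_words_cat /ninstances -sumn_count sumnE big_map.
rewrite big_distrl /= big_seq [leqRHS]big_seq; apply: leq_sum => u.
rewrite mem_words => /eqP size_u; rewrite count_words_cat.
rewrite -(size_words q k) -count_predT -sumn_count sumnE big_map mulnC.
rewrite big_distrl big_seq [leqRHS]big_seq; apply: leq_sum => v.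
rewrite mem_words => /eqP size_v /=; rewrite mul1n.
apply: (@leq_trans (count (fun w => zimin_instance n u && (w == u)) (words q m))).
  apply: eq_leq; apply: eq_in_count => w; rewrite mem_words => /eqP size_w.
  rewrite /zimin_border take_size_cat // catA size_cat size_w addnK drop_size_cat //.
  by rewrite size_cat size_u size_v -addnA lt_2m_M.
case: (zimin_instance n u) => /=; last by rewrite count_pred0.
by rewrite (count_uniq_mem _ (uniq_words q m)) leq_b1.
Qed.

Lemma ninstances_rec n M :
  ninstances n.+1 M <=
    \sum_(0 <= m < M | 2 * m < M) ninstances n m * q ^ (M - 2 * m).
Proof.
apply: (@leq_trans (\sum_(0 <= m < M) count (zimin_border n m) (words q M))).
  apply: count_le_sum_count => W; rewrite mem_words => /eqP <-.
  by rewrite /index_iota subn0; exact: zimin_instance_border.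
rewrite [leqRHS]big_mkcond /=; apply: leq_sum => m _; case: ifP => [|ge_2m_M].
  exact: count_zimin_border.
rewrite leqn0 -(count_pred0 (words q M)); apply/eqP/eq_in_count => W.
by rewrite mem_words /zimin_border => /eqP ->; rewrite ge_2m_M.
Qed.

End Counting.

Lemma geometric_tail_sum q a b c : 0 < q -> b <= c.+1 ->
  (q - 1) * \sum_(0 <= m < b | a <= m) q ^ (c - m) + q ^ (c.+1 - maxn a b) =
    q ^ (c.+1 - a).
Proof.
move=> q_gt0; elim: b => [|b IHb] lt_b_c; first by rewrite big_geq // muln0 maxn0.
rewrite big_mkcond big_nat_recr //= -big_mkcond -(IHb (ltnW lt_b_c)).
case: (leqP a b) => [le_ab|lt_ba]; last first.
  by rewrite addn0 (maxn_idPl lt_ba).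
rewrite (maxn_idPr (leqW le_ab)) subSS mulnDr -addnA.
by congr (_ + _); rewrite subSn ?(ltnW lt_b_c) // expnS addnC -mulSn subn1 prednK.
Qed.

Lemma ninstances_bound q n M : 0 < q ->
  ninstances q n.+1 M * ((q - 1) ^ n * q ^ (2 ^ n.+1)) <= q ^ (M + 2 * n.+1).
Proof.
move=> q_gt0; elim: n M => [|n IHn] M.
  rewrite mul1n expnD leq_mul2r -(size_words q M) count_size orbT //.
set t := 2 ^ n.+1; have t_gt0 : 0 < t by rewrite expn_gt0.
rewrite [2 ^ n.+2]expnS mul2n -addnn -/t.
apply: leq_trans (leq_mul (ninstances_rec q n.+1 M) (leqnn _)) _.
rewrite big_distrl /=.
apply: (@leq_trans
  (\sum_(0 <= m < M | t.-1 <= m) (q - 1) * q ^ (2 * n.+1) * q ^ (M + t - m))).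
  rewrite [leqLHS]big_mkcond [leqRHS]big_mkcond /=; apply: leq_sum => m _.
  case: ifP => // lt_2m_M; case: (leqP t.-1 m) => [le_tm|lt_mt]; last first.
    by rewrite ninstances_small ?size_zimin.
  have split_exp : q ^ (2 * n.+1) * q ^ (M + t - m) =
      q ^ (m + 2 * n.+1) * q ^ (M - 2 * m + t).
    by rewrite -!expnD; congr (q ^ _); lia.
  rewrite -[leqRHS]mulnA split_exp [leqRHS]mulnCA.
  have -> : ninstances q n.+1 m * q ^ (M - 2 * m) * ((q - 1) ^ n.+1 * q ^ (t + t)) =
      ninstances q n.+1 m * ((q - 1) ^ n * q ^ t) * ((q - 1) * q ^ (M - 2 * m + t)).
    by rewrite expnS !expnD; ring.
  exact: leq_mul (IHn m) (leqnn _).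
rewrite -big_distrr /= mulnAC (_ : M + 2 * n.+2 = M + 2 + 2 * n.+1); last lia.
rewrite expnD leq_mul2r; apply/orP; right.
have := geometric_tail_sum q t.-1 M (M + t) q_gt0 (leqW (leq_addr t M)).
rewrite (_ : (M + t).+1 - t.-1 = M + 2) => [<-|]; [exact: leq_addr | lia].
Qed.

Import Order.TTheory GRing.Theory Num.Theory.
Local Open Scope ring_scope.

Theorem mainTheorem5 (q : nat) (hq : (1 < q)%N) (n M : nat)
  (hn : (0 < n)%N) (hM : (0 < M)%N) :
  (#|C n q M|%:R : rat) <=
    ((q%:R / (q%:R - 1)) ^+ n.-1) *
    (q%:R : rat) ^ (M%:Z - (2 ^ n)%N%:Z + n%:Z + 1).
Proof.
case: n hn => // n _ /=.
have -> : #|C n.+1 q M| = ninstances q n.+1 M by exact: card_tuples_count.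
have bound := ninstances_bound q n M (ltnW hq).
have q_neq0 : (q%:R : rat) != 0 by rewrite pnatr_eq0 -lt0n ltnW.
have q1_gt0 : (0 : rat) < q%:R - 1 by rewrite subr_gt0 ltr1n.
have -> : M%:Z - (2 ^ n.+1)%N%:Z + n.+1%:Z + 1 = (M + n.+2)%N%:Z - (2 ^ n.+1)%N%:Z.
  by rewrite !PoszD; lia.
rewrite expfzDr // -exprnN expr_div_n mulf_div ler_pdivlMr; last first.
  by rewrite mulr_gt0 ?exprn_gt0 // ltr0n ltnW.
rewrite (_ : q%:R ^ (M + n.+2)%N = q%:R ^+ (M + n.+2)) //.
have -> : q%:R - 1 = (q - 1)%:R :> rat by rewrite natrB // ltnW.
rewrite -!natrX -!natrM ler_nat -expnD.
have -> : (n + (M + n.+2) = M + 2 * n.+1)%N by lia.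
exact: bound.
Qed.
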